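(* Let $n\ge 1$ and $a=(a_0,\dots,a_n)\in\mathbb{R}^{n+1}$. Then the tropical entropy satisfies $H(a)\le 1-1/n$.
   Context: For an integer $s\ge 0$, let $D_s\subset\mathbb{R}^s$ be the set of vectors $z=(z_1,\dots,z_s)$ satisfying $a$, i.e. such that for every $k$ with $0\le k\le s-1-n$ the minimum $\min_{0\le i\le n}\{a_i+z_{k+1+i}\}$ is attained for at least two different indices $i$. $D_s$ is a polyhedral complex; let $d_s=\dim D_s$. The sequence $d_s$ is subadditive, and the tropical entropy of $a$ is $H(a)=\lim_{s\to\infty} d_s/s$. *)

From HB Require Import structures.
From mathcomp Require Import all_boot all_order all_algebra.
From mathcomp Require Import all_classical all_reals all_analysis.
Set Implicit Arguments. Unset Strict Implicit. Unset Printing Implicit Defensive.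
Import Order.TTheory GRing.Theory Num.Theory.
Local Open Scope ring_scope.

(* a = (a_0,...,a_n) is a : 'I_n.+1 -> R.  Vectors z in R^s are 'rV[R]_s,
   with 0-based coordinates: z_{k+1+i} (1-based, paper) = z 0 (k+i) here. *)

Definition zc (R : realType) (s : nat) (z : 'rV[R]_s) (m : nat) : R :=
  oapp (fun i : 'I_s => z ord0 i) 0 (insub m).

Definition satisfies (R : realType) (n : nat) (a : 'I_n.+1 -> R) (s : nat)
  (z : 'rV[R]_s) : Prop :=
  forall k : nat, (k + n < s)%N ->
    exists i j : 'I_n.+1, i != j /\
      (forall l : 'I_n.+1,
         a i + zc z (k + i) <= a l + zc z (k + l) /\
         a j + zc z (k + j) <= a l + zc z (k + l)).

Definition Dset (R : realType) (n : nat) (a : 'I_n.+1 -> R) (s : nat)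
  : set 'rV[R]_s := [set z | satisfies a z].

Definition has_simplex (R : realType) (s : nat) (D : set 'rV[R]_s) (k : nat)
  : Prop :=
  exists p : 'I_k.+1 -> 'rV[R]_s,
    row_free (\matrix_(i < k) (p (lift ord0 i) - p ord0)) /\
    (forall w : 'I_k.+1 -> R, (forall i, 0 <= w i) -> \sum_i w i = 1 ->
       D (\sum_i w i *: p i)).

(* Dimension of a (nonempty) finite union of polyhedra in R^s, e.g. the
   polyhedral complex D_s: the largest k such that it contains a
   k-dimensional simplex (= the maximal dimension of its cells). *)
Definition pdim (R : realType) (s : nat) (D : set 'rV[R]_s) : nat :=
  \max_(k < s.+1 | `[< has_simplex D k >]) k.

Definition dseq (R : realType) (n : nat) (a : 'I_n.+1 -> R) (s : nat) : nat :=
  pdim (@Dset R n a s).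

(* A simplex in D_(s+t) splits into its first s and last t coordinates, and
   rank is subadditive over column blocks, so d is subadditive and, by Fekete,
   H(a) = inf_m d_m / m.  For m = N n + 1 consider the N windows starting at
   0, n, ..., (N-1) n.  On a simplex in D_m each window forces, at every point,
   a tie a_i + z_(k+i) = a_j + z_(k+j) for some i < j; finitely many affine
   hyperplanes cannot cover a simplex unless one contains it, so one tie holds
   on the whole simplex.  The N resulting linear equations have staircase
   pivots, hence are independent: d_m <= m - N, and
   H(a) <= (N n + 1 - N) / (N n + 1) -> 1 - 1/n. *)

From HB Require Import structures.
From mathcomp Require Import all_boot all_order all_algebra.
From mathcomp Require Import all_classical all_reals all_analysis.
From mathcomp Require Import zify ring lra.
Set Implicit Arguments. Unset Strict Implicit. Unset Printing Implicit Defensive.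
Import Order.TTheory GRing.Theory Num.Theory.
Import numFieldNormedType.Exports.
Local Open Scope classical_set_scope.
Local Open Scope ring_scope.


Section Coordinates.
Variable R : realType.

Lemma zcE s (z : 'rV[R]_s) m (m_lt : (m < s)%N) : zc z m = z ord0 (Ordinal m_lt).
Proof. by rewrite /zc insubT. Qed.

Lemma zc_out s (z : 'rV[R]_s) m : (s <= m)%N -> zc z m = 0.
Proof. by move=> s_le; rewrite /zc insubF // ltnNge s_le. Qed.

Lemma zc_sum s k (w : 'I_k -> R) (p : 'I_k -> 'rV[R]_s) m :
  zc (\sum_i w i *: p i) m = \sum_i w i * zc (p i) m.
Proof.
case: (ltnP m s) => m_s.
  by rewrite !(zcE _ m_s) summxE; apply: eq_bigr => i _; rewrite mxE (zcE _ m_s).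
by rewrite zc_out // big1 // => i _; rewrite zc_out ?mulr0.
Qed.

Lemma zcB s (u v : 'rV[R]_s) m : zc (u - v) m = zc u m - zc v m.
Proof.
case: (ltnP m s) => m_s; last by rewrite !zc_out ?subr0.
by rewrite !(zcE _ m_s) !mxE.
Qed.

Lemma zc_lsubmx s t (z : 'rV[R]_(s + t)) m : (m < s)%N -> zc (lsubmx z) m = zc z m.
Proof.
move=> m_s; have m_st : (m < s + t)%N by apply: ltn_addr.
by rewrite (zcE _ m_s) (zcE _ m_st) mxE; congr (z _ _); apply: val_inj.
Qed.

Lemma zc_rsubmx s t (z : 'rV[R]_(s + t)) m :
  (m < t)%N -> zc (rsubmx z) m = zc z (s + m).
Proof.
move=> m_t; have sm_st : (s + m < s + t)%N by rewrite ltn_add2l.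
by rewrite (zcE _ m_t) (zcE _ sm_st) mxE; congr (z _ _); apply: val_inj.
Qed.

Lemma sum_mul_indicator s (z : 'rV[R]_s) x :
  \sum_(c < s) z 0 c * ((c : nat) == x)%:R = zc z x.
Proof.
case: (ltnP x s) => x_s; last first.
  rewrite zc_out // big1 // => c _.
  by rewrite ltn_eqF ?mulr0 // (leq_trans (ltn_ord c)).
rewrite (zcE _ x_s) (bigD1 (Ordinal x_s)) //= eqxx mulr1 big1 ?addr0 // => c.
by rewrite -val_eqE /= => /negbTE ->; rewrite mulr0.
Qed.

End Coordinates.

Section Rank.
Variable F : fieldType.

Lemma mxrank_hsubmx k s t (M : 'M[F]_(k, s + t)) :
  (\rank M <= \rank (lsubmx M) + \rank (rsubmx M))%N.
Proof.
rewrite -{1}(hsubmxK M) -mxrank_tr tr_row_mx -addsmxE.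
rewrite -(mxrank_tr (lsubmx M)) -(mxrank_tr (rsubmx M)).
exact: (mxrank_adds_leqif _ _).1.
Qed.

Lemma row_free_pivots m s (G : 'M[F]_(m, s)) (piv : 'I_m -> 'I_s) :
  (forall w, G w (piv w) != 0) ->
  (forall w' w : 'I_m, (w' < w)%N -> G w' (piv w) = 0) ->
  row_free G.
Proof.
move=> piv_neq0 piv_eq0.
have trig : is_trig_mx (colsub piv G).
  by apply/is_trig_mxP => w' w lt_w'w; rewrite mxE piv_eq0.
have unit_sub : colsub piv G \in unitmx.
  rewrite unitmxE unitfE det_trig //; apply/prodf_neq0 => w _.
  by rewrite mxE piv_neq0.
rewrite /row_free eqn_leq rank_leq_row -{1}(mxrank_unit unit_sub).
have -> : colsub piv G = G *m colsub piv 1%:M by rewrite mulmx_colsub mulmx1.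
exact: mxrankM_maxl.
Qed.

Lemma mxrank_mul_tr_eq0 k m s (M : 'M[F]_(k, s)) (G : 'M[F]_(m, s)) :
  M *m G^T = 0 -> (\rank M + \rank G <= s)%N.
Proof.
move=> /sub_kermxP /mxrankS; rewrite mxrank_ker mxrank_tr => rkM.
by have := rank_leq_col G; lia.
Qed.

End Rank.

Section Dimension.
Variable R : realType.

Lemma has_simplex_pdim s (D : set 'rV[R]_s) k :
  (k <= s)%N -> has_simplex D k -> (k <= pdim D)%N.
Proof.
rewrite -ltnS => k_s Dk.
exact: (leq_bigmax_cond (Ordinal k_s) (asboolT Dk)).
Qed.

Lemma pdim_le s (D : set 'rV[R]_s) b :
  (forall k, has_simplex D k -> (k <= b)%N) -> (pdim D <= b)%N.
Proof. by move=> Db; apply/bigmax_leqP => k /asboolP; apply: Db. Qed.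

Lemma has_simplex_rank s k (D : set 'rV[R]_s) (q : 'I_k.+1 -> 'rV[R]_s) :
  (forall w : 'I_k.+1 -> R, (forall i, 0 <= w i) -> \sum_i w i = 1 ->
     D (\sum_i w i *: q i)) ->
  has_simplex D (\rank (\matrix_(i < k) (q (lift ord0 i) - q ord0))).
Proof.
set M := \matrix_(i < k) _ => qD; set f := maxrankfun M.
pose p (i : 'I_(\rank M).+1) :=
  if unlift ord0 i is Some j then q (lift ord0 (f j)) else q ord0.
exists p; split.
  have -> : \matrix_(i < \rank M) (p (lift ord0 i) - p ord0) = rowsub f M.
    by apply/matrixP => i j; rewrite !mxE /p liftK unlift_none.
  exact: maxrowsub_free.
move=> w w_ge0 w_sum1.
pose u (i : 'I_k.+1) := if unlift ord0 i is Some j then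
  \sum_(l < \rank M | f l == j) w (lift ord0 l) else w ord0.
have sum_u : \sum_(l < \rank M) w (lift ord0 l) = \sum_(j < k) u (lift ord0 j).
  by rewrite (partition_big f predT) //; apply: eq_bigr => j _; rewrite /u liftK.
have -> : \sum_i w i *: p i = \sum_i u i *: q i.
  rewrite !big_ord_recl /p /u /= !unlift_none; congr (_ + _).
  under eq_bigr do rewrite liftK.
  under [RHS]eq_bigr do rewrite liftK.
  rewrite (partition_big f predT) //; apply: eq_bigr => j _.
  by rewrite scaler_suml; apply: eq_bigr => l /eqP <-.
apply: qD => [i|].
  by rewrite /u; case: (unlift _ _) => [j|] //; apply: sumr_ge0.
by rewrite big_ord_recl -sum_u {1}/u unlift_none -w_sum1 [RHS]big_ord_recl.
Qed.

Lemma mxrank_linear_hull_le_pdim s t k (f : {linear 'rV[R]_s -> 'rV[R]_t})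
    (D : set 'rV[R]_s) (E : set 'rV[R]_t) (p : 'I_k.+1 -> 'rV[R]_s) :
  (forall z, D z -> E (f z)) ->
  (forall w : 'I_k.+1 -> R, (forall i, 0 <= w i) -> \sum_i w i = 1 ->
     D (\sum_i w i *: p i)) ->
  (\rank (\matrix_(i < k) (f (p (lift ord0 i)) - f (p ord0))) <= pdim E)%N.
Proof.
move=> fDE pD; apply: has_simplex_pdim; first exact: rank_leq_col.
apply: (has_simplex_rank (q := f \o p)) => w w_ge0 w_sum1.
have -> : \sum_i w i *: (f \o p) i = f (\sum_i w i *: p i).
  by rewrite linear_sum; apply: eq_bigr => i _; rewrite linearZ.
exact/fDE/pD.
Qed.

End Dimension.

Section Subadditivity.
Variables (R : realType) (n : nat) (a : 'I_n.+1 -> R).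

Lemma satisfies_lsubmx s t (z : 'rV[R]_(s + t)) :
  satisfies a z -> satisfies a (lsubmx z).
Proof.
move=> az k k_s; have [|i [j [ij ij_min]]] := az k; first lia.
have win (x : 'I_n.+1) : (k + x < s)%N by have := ltn_ord x; lia.
by exists i, j; split => // l; rewrite !zc_lsubmx ?win //; apply: ij_min.
Qed.

Lemma satisfies_rsubmx s t (z : 'rV[R]_(s + t)) :
  satisfies a z -> satisfies a (rsubmx z).
Proof.
move=> az k k_t; have [|i [j [ij ij_min]]] := az (s + k)%N; first lia.
have win (x : 'I_n.+1) : (k + x < t)%N by have := ltn_ord x; lia.
by exists i, j; split => // l; rewrite !zc_rsubmx ?win // !addnA; apply: ij_min.
Qed.

Lemma dseq_subadditive s t : (dseq a (s + t) <= dseq a s + dseq a t)%N.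
Proof.
apply: pdim_le => k [p [p_free pD]].
set M := \matrix_(i < k) (p (lift ord0 i) - p ord0).
have <- : \rank M = k by apply/eqP.
apply: (leq_trans (mxrank_hsubmx M)); apply: leq_add.
- have -> : lsubmx M = \matrix_(i < k) (lsubmx (p (lift ord0 i)) - lsubmx (p ord0)).
    by apply/matrixP => i j; rewrite !mxE.
  by apply: (mxrank_linear_hull_le_pdim (f := lsubmx) _ pD) => z /satisfies_lsubmx.
- have -> : rsubmx M = \matrix_(i < k) (rsubmx (p (lift ord0 i)) - rsubmx (p ord0)).
    by apply/matrixP => i j; rewrite !mxE.
  by apply: (mxrank_linear_hull_le_pdim (f := rsubmx) _ pD) => z /satisfies_rsubmx.
Qed.

End Subadditivity.

Section Fekete.
Variables (R : realType) (d : nat -> nat).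
Hypothesis d_subadd : forall s t, (d (s + t) <= d s + d t)%N.

Lemma subadditive_mul_add q m r : (d (q * m + r) <= q * d m + d r)%N.
Proof.
elim: q => [|q IH]; first by rewrite !mul0n.
by rewrite !mulSn -!addnA (leq_trans (d_subadd _ _)) // leq_add2l.
Qed.

Lemma subadditive_le_linear r : (d r <= r * d 1 + d 0)%N.
Proof. by have := subadditive_mul_add r 1 0; rewrite muln1 addn0. Qed.

Lemma subadditive_ratio_le m s : (0 < m)%N -> (0 < s)%N ->
  (d s)%:R / s%:R <= (d m)%:R / m%:R + (m * d 1 + d 0)%:R / s%:R :> R.
Proof.
move=> m_gt0 s_gt0; set c := (m * d 1 + d 0)%N.
have ds_le : (d s <= s %/ m * d m + c)%N.
  rewrite {1}(divn_eq s m); apply: (leq_trans (subadditive_mul_add _ _ _)).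
  rewrite leq_add2l (leq_trans (subadditive_le_linear _)) // leq_add2r.
  by rewrite leq_mul2r ltnW ?ltn_mod ?orbT.
have ds_le' : (d s * m <= d m * s + c * m)%N.
  have := leq_divM s m; nia.
have m_neq0 : (m%:R : R) != 0 by rewrite pnatr_eq0 -lt0n.
have s_neq0 : (s%:R : R) != 0 by rewrite pnatr_eq0 -lt0n.
have -> : (d s)%:R / s%:R = (d s * m)%:R / (m * s)%:R :> R.
  by rewrite !natrM; field; rewrite m_neq0 s_neq0.
have -> : (d m)%:R / m%:R + c%:R / s%:R = (d m * s + c * m)%:R / (m * s)%:R :> R.
  by rewrite natrD !natrM; field; rewrite m_neq0 s_neq0.
by rewrite ler_pM2r ?invr_gt0 ?ltr0n ?muln_gt0 ?m_gt0 // ler_nat.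
Qed.

Lemma fekete : exists L : R,
  ((fun s : nat => ((d s)%:R / s%:R : R)) @ \oo --> L) /\
  forall m, (0 < m)%N -> L <= (d m)%:R / m%:R.
Proof.
pose E := [set x : R | exists2 m, (0 < m)%N & x = (d m)%:R / m%:R].
have E_lb : has_lbound E by exists 0 => _ [m _ ->]; rewrite divr_ge0.
have E_n0 : E !=set0 by exists ((d 1)%:R / 1%:R), 1%N.
have infE_le m : (0 < m)%N -> inf E <= (d m)%:R / m%:R.
  by move=> m_gt0; apply: ge_inf => //; exists m.
exists (inf E); split => //.
apply/cvgrPdist_le => e e_gt0.
have e2_gt0 : 0 < e / 2 by rewrite divr_gt0.
have [_ [m m_gt0 ->] dm_lt] := inf_adherent e2_gt0 (conj E_n0 E_lb).
set c := (m * d 1 + d 0)%N.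
exists (Num.truncn (2 * c%:R / e : R)).+1 => // s /= s_ge.
have s_gt0 : (0 < s)%N by apply: leq_trans s_ge.
have c_le : c%:R / s%:R <= e / 2 :> R.
  have : 2 * c%:R / e < s%:R :> R.
    by apply: (lt_le_trans (truncnS_gt _)); rewrite ler_nat.
  rewrite ler_pdivrMr ?ltr0n // ltr_pdivrMr // => lt_s.
  by rewrite mulrAC ler_pdivlMr // mulrC (mulrC e) ltW.
have ds_le : _ <= _ + c%:R / s%:R := subadditive_ratio_le m_gt0 s_gt0.
have infE_ds := infE_le _ s_gt0.
rewrite distrC ger0_norm ?subr_ge0 //; lra.
Qed.

End Fekete.

Lemma poly_eq0_on_unit_interval (F : numFieldType) (p : {poly F}) :
  (forall t, 0 <= t <= 1 -> p.[t] = 0) -> p = 0.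
Proof.
move=> p0; apply/eqP/negPn/negP => p_neq0.
pose rs := [seq (m.+1%:R : F)^-1 | m <- iota 0 (size p)].
have rs_roots : all (root p) rs.
  apply/allP => _ /mapP [m _ ->]; apply/rootP/p0.
  by rewrite invr_ge0 ler0n invf_le1 ?ltr0n // ler1n.
have rs_uniq : uniq rs.
  rewrite map_inj_uniq ?iota_uniq // => x y /invr_inj /eqP.
  by rewrite eqr_nat eqSS => /eqP.
by have := max_poly_roots p_neq0 rs_roots rs_uniq; rewrite size_map size_iota ltnn.
Qed.

Section MomentCurve.
Variables (R : realType) (k : nat).

(* Barycentric coordinates of the moment curve t |-> (t, t^2, ..., t^k)/(k+1),
   t in [0, 1]: along it an affine function becomes a polynomial whose
   coefficients determine the values at the vertices. *)
Definition moment_weight (t : R) (i : 'I_k.+1) : R :=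
  if unlift ord0 i is Some l then (k.+1%:R)^-1 * t ^+ l.+1
  else 1 - \sum_(l < k) (k.+1%:R)^-1 * t ^+ l.+1.

Lemma moment_weight_ge0 t i : 0 <= t <= 1 -> 0 <= moment_weight t i.
Proof.
move=> /andP [t_ge0 t_le1]; rewrite /moment_weight.
case: (unlift _ _) => [l|]; first by rewrite mulr_ge0 ?exprn_ge0.
rewrite subr_ge0 (@le_trans _ _ (\sum_(l < k) (k.+1%:R)^-1)) //.
  by apply: ler_sum => l _; rewrite ler_piMr ?exprn_ile1.
rewrite sumr_const card_ord -[_ *+ k]mulr_natr mulrC.
by rewrite ler_pdivrMr ?ltr0n // mul1r ler_nat.
Qed.

Lemma moment_weight_sum t : \sum_i moment_weight t i = 1.
Proof.
rewrite big_ord_recl; under eq_bigr do rewrite /moment_weight liftK.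
by rewrite /moment_weight unlift_none subrK.
Qed.

Definition moment_poly (u : 'I_k.+1 -> R) : {poly R} :=
  (u ord0)%:P +
  \sum_(l < k) ((k.+1%:R)^-1 * (u (lift ord0 l) - u ord0)) *: 'X^(l.+1).

Lemma horner_moment_poly u t :
  (moment_poly u).[t] = \sum_i moment_weight t i * u i.
Proof.
rewrite hornerD hornerC horner_sum big_ord_recl.
under [in RHS]eq_bigr do rewrite /moment_weight liftK.
rewrite [in LHS](eq_bigr (fun l : 'I_k =>
  (k.+1%:R)^-1 * (u (lift ord0 l) - u ord0) * t ^+ l.+1)); last first.
  by move=> l _; rewrite hornerZ hornerXn.
rewrite /moment_weight unlift_none mulrBl mul1r mulr_suml -addrA; congr (_ + _).
by rewrite addrC -sumrB; apply: eq_bigr => l _; ring.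
Qed.

Lemma moment_poly_eq0 u : moment_poly u = 0 -> forall i, u i = 0.
Proof.
move=> u0.
have coef_u j : (moment_poly u)`_j = (u ord0)%:P`_j +
    \sum_(l < k) (k.+1%:R)^-1 * (u (lift ord0 l) - u ord0) * (j == l.+1)%:R.
  by rewrite coefD coef_sum; under eq_bigr do rewrite coefZ coefXn.
have u0_0 : u ord0 = 0.
  have := coef_u 0%N; rewrite u0 coef0 coefC /= big1 ?addr0 // => l _.
  by rewrite mulr0.
move=> i; case: (unliftP ord0 i) => [l ->|-> //].
have := coef_u l.+1; rewrite u0 coef0 coefC add0r (bigD1 l) //= eqxx mulr1.
rewrite big1 ?addr0 => [|l' neq_l'l]; last first.
  by move: neq_l'l; rewrite -val_eqE eqSS eq_sym => /negbTE ->; rewrite mulr0.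
by rewrite u0_0 subr0 => /esym /eqP; rewrite mulf_eq0 invr_eq0 pnatr_eq0 => /eqP.
Qed.

Lemma simplex_cover_vanishing (I : finType) (P : pred I) (v : I -> 'I_k.+1 -> R) :
  (forall w : 'I_k.+1 -> R, (forall i, 0 <= w i) -> \sum_i w i = 1 ->
     exists2 r, P r & \sum_i w i * v r i = 0) ->
  exists2 r, P r & forall i, v r i = 0.
Proof.
move=> cover.
have : \prod_(r | P r) moment_poly (v r) == 0.
  apply/eqP/poly_eq0_on_unit_interval => t t01.
  have [r Pr vr0] :=
    cover _ (fun i => moment_weight_ge0 i t01) (moment_weight_sum t).
  by rewrite horner_prod (bigD1 r) //= horner_moment_poly vr0 mul0r.
by case/prodf_eq0 => r Pr /eqP /moment_poly_eq0; exists r.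
Qed.

End MomentCurve.

Section Windows.
Variables (R : realType) (n : nat) (a : 'I_n.+1 -> R).

Lemma satisfies_hull_tie s k (p : 'I_k.+1 -> 'rV[R]_s) k0 :
  (k0 + n < s)%N ->
  (forall w : 'I_k.+1 -> R, (forall i, 0 <= w i) -> \sum_i w i = 1 ->
     satisfies a (\sum_i w i *: p i)) ->
  exists i j : 'I_n.+1, (i < j)%N /\
    forall v, a i + zc (p v) (k0 + i) = a j + zc (p v) (k0 + j).
Proof.
move=> k0_n hull.
pose gap (ij : 'I_n.+1 * 'I_n.+1) v :=
  a ij.1 + zc (p v) (k0 + ij.1) - (a ij.2 + zc (p v) (k0 + ij.2)).
suff [[i j] /= lt_ij tie] :
    exists2 ij : 'I_n.+1 * 'I_n.+1, (ij.1 < ij.2)%N & forall v, gap ij v = 0.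
  by exists i, j; split => // v; apply/eqP; rewrite -subr_eq0; exact/eqP/tie.
apply: simplex_cover_vanishing => w w_ge0 w_sum1.
set z := \sum_i w i *: p i.
have gap_hull x y : \sum_v w v * gap (x, y) v
    = a x + zc z (k0 + x) - (a y + zc z (k0 + y)).
  rewrite !zc_sum -[a x]mul1r -[a y]mul1r -w_sum1 !mulr_suml -!big_split -sumrB.
  by apply: eq_bigr => v _; rewrite /gap /=; ring.
have [i [j [neq_ij ij_min]]] := hull w w_ge0 w_sum1 k0 k0_n.
have tie : a i + zc z (k0 + i) = a j + zc z (k0 + j).
  by apply/le_anti; rewrite (ij_min j).1 (ij_min i).2.
case: (ltngtP i j) => [lt_ij | lt_ji | eq_ij].
- by exists (i, j); rewrite // gap_hull tie subrr.
- by exists (j, i); rewrite // gap_hull tie subrr.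
- by move: neq_ij; rewrite (ord_inj eq_ij) eqxx.
Qed.

Lemma dseq_window_bound N : (dseq a (N * n + 1) <= N * n + 1 - N)%N.
Proof.
apply: pdim_le => k [p [p_free pD]].
have win (w : 'I_N) : (w * n + n < N * n + 1)%N.
  have : (w.+1 * n <= N * n)%N by rewrite leq_mul2r ltn_ord orbT.
  by rewrite mulSn; lia.
have /fin_all_exists2 [ij lt_ij ij_tie] (w : 'I_N) :
    exists2 ij : 'I_n.+1 * 'I_n.+1, (ij.1 < ij.2)%N & forall v,
      a ij.1 + zc (p v) (w * n + ij.1)%N = a ij.2 + zc (p v) (w * n + ij.2)%N.
  have [i [j [lt_ij tie]]] := satisfies_hull_tie (win w) pD.
  by exists (i, j).
(* Row w is e_(wn+j) - e_(wn+i) for the tie (i, j) of window w; its pivot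
   wn+j lies beyond every earlier window. *)
pose G : 'M[R]_(N, N * n + 1) := \matrix_(w, c)
  (((c : nat) == w * n + (ij w).2)%N%:R - ((c : nat) == w * n + (ij w).1)%N%:R).
set M := \matrix_(l < k) (p (lift ord0 l) - p ord0).
have MG : M *m G^T = 0.
  apply/matrixP => l w; rewrite !mxE.
  under eq_bigr do rewrite [M _ _]mxE [G^T _ _]mxE [G _ _]mxE mulrBr.
  rewrite sumrB !sum_mul_indicator !zcB.
  have := ij_tie w ord0; have := ij_tie w (lift ord0 l); lra.
pose piv w : 'I_(N * n + 1) :=
  Ordinal (leq_ltn_trans (leq_add (leqnn _) (leq_ord (ij w).2)) (win w)).
have piv_neq0 w : G w (piv w) != 0.
  by rewrite mxE /= eqxx eqn_add2l gtn_eqF ?lt_ij // subr0 oner_neq0.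
have piv_eq0 (w' w : 'I_N) : (w' < w)%N -> G w' (piv w) = 0.
  move=> lt_w'w; have : (w'.+1 * n <= w * n)%N by rewrite leq_mul2r lt_w'w orbT.
  rewrite mulSn => le_n.
  have far (x : 'I_n.+1) : (w * n + (ij w).2 == w' * n + x)%N = false.
    by apply/eqP; have := leq_ord x; have := lt_ij w; lia.
  by rewrite mxE /= !far subrr.
have := mxrank_mul_tr_eq0 MG.
by rewrite (eqP p_free) (eqP (row_free_pivots piv_neq0 piv_eq0)); lia.
Qed.

End Windows.

Lemma ge0_of_forall_nat_affine (R : realType) (x c : R) :
  (forall N : nat, 0 <= N%:R * x + c) -> 0 <= x.
Proof.
move=> affine_ge0; rewrite leNgt; apply/negP => x_lt0.
have := affine_ge0 (Num.truncn (c / - x)).+1.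
have : c / - x < (Num.truncn (c / - x)).+1%:R := truncnS_gt _.
rewrite ltr_pdivrMr ?oppr_gt0 // => ?; lra.
Qed.

Lemma le_one_sub_inv_of_window_ratios (R : realType) (n : nat) (H : R) :
  (0 < n)%N ->
  (forall N : nat, H <= (N * n + 1 - N)%:R / (N * n + 1)%:R) -> H <= 1 - n%:R^-1.
Proof.
move=> n_gt0 H_le.
have n_gt0' : (0 : R) < n%:R by rewrite ltr0n.
suff : 0 <= n%:R * (1 - H) - 1.
  by move=> ?; rewrite -(ler_pM2l n_gt0') mulrBr mulr1 mulfV ?gt_eqF //; lra.
apply: (@ge0_of_forall_nat_affine _ _ (1 - H)) => N.
have := H_le N; rewrite ler_pdivlMr ?ltr0n ?addn_gt0 ?orbT // natrB; last first.
  by rewrite addn1 ltnW // ltnS leq_pmulr.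
rewrite natrD natrM => ?; nra.
Qed.

Theorem proposition3 (R : realType) (n : nat) (a : 'I_n.+1 -> R) :
  (1 <= n)%N ->
  exists H : R,
    ((fun s : nat => ((dseq a s)%:R / s%:R : R)) @ \oo --> H) /\
    H <= 1 - (n%:R)^-1.
Proof.
move=> n_gt0.
have [H [cvgH H_le]] := @fekete R _ (@dseq_subadditive R n a).
exists H; split => //; apply: le_one_sub_inv_of_window_ratios n_gt0 _ => N.
have m_gt0 : (0 < N * n + 1)%N by rewrite addn1.
apply: le_trans (H_le _ m_gt0) _.
by rewrite ler_pM2r ?invr_gt0 ?ltr0n // ler_nat dseq_window_bound.
Qed.
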